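(* Let $\mathbb{K}$ be a field, let $P_1, P_2 \in \mathbb{K}[X]$ be irreducible polynomials with $P_1' \neq 0$ and $P_2' \neq 0$, and let $k \geq 1$ be an integer. Then $\mathbb{K}[X]/(P_1^k)$ and $\mathbb{K}[X]/(P_2^k)$ are isomorphic as $\mathbb{K}$-algebras if and only if $\mathbb{K}[X]/(P_1)$ and $\mathbb{K}[X]/(P_2)$ are isomorphic as $\mathbb{K}$-algebras.
   Context: $\mathbb{K}$ is an arbitrary field; $P'$ denotes the formal derivative (for irreducible $P$, $P'\neq0$ means $P$ is separable). *)

From HB Require Import structures.
From mathcomp Require Import all_boot all_order all_algebra.
Set Implicit Arguments. Unset Strict Implicit. Unset Printing Implicit Defensive.
Import GRing.Theory.
Local Open Scope ring_scope.

(* K[X]/(p), for p a nonzero polynomial: the ideal (p) equals the ideal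
   generated by the monic associate (lead_coef p)^-1 *: p, and MathComp's
   qpoly {poly %/ q} is K[X]/(q) for q monic of size > 1. *)
Definition quot_alg (K : fieldType) (p : {poly K}) : Type :=
  {poly %/ ((lead_coef p)^-1 *: p)}.

Definition kalg_iso (K : fieldType) (A B : lalgType K) : Prop :=
  exists f : {lrmorphism A -> B}, bijective f.

From HB Require Import structures.
From mathcomp Require Import all_boot all_order all_algebra.
From mathcomp Require Import ring.
Import GRing.Theory.
Local Open Scope ring_scope.

(* A K-algebra morphism K[X]/(h1) -> K[X]/(h2) is determined by the image s
   of X, and is then p |-> p \Po s; it is well defined iff h2 | h1 \Po s and
   injective iff h2 | p \Po s forces h1 | p.  Injective maps between
   quotients of equal degree are bijective.
   An isomorphism for P1^k, P2^k sends X to some s with P2 | P1 \Po s; since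
   K[X]/(P1) is a field, p |-> p \Po s is injective on it.
   Conversely, the image s of X under an isomorphism K[X]/(P1) -> K[X]/(P2)
   satisfies P2 | P1 \Po s, and P2 does not divide P1' \Po s because P1' is a
   nonzero polynomial of smaller degree.  Replacing s by s + P2 if necessary
   gives P1 \Po s = P2 u with P2 coprime to u, and then P2^j | p \Po s
   forces P1^j | p by induction on j: this makes p |-> p \Po s injective on
   K[X]/(P1^k). *)

Set Implicit Arguments.
Unset Strict Implicit.
Unset Printing Implicit Defensive.

Section InjectiveLinear.
Variables (K : fieldType) (vT wT : vectType K) (f : {linear vT -> wT}).
Hypothesis f_inj : injective f.

Lemma lker_linfun_inj : lker (linfun f) == 0%VS.
Proof. by apply/lker0P => x y; rewrite !lfunE; apply: f_inj. Qed.

Lemma dim_limg_inj : \dim (limg (linfun f)) = \dim {:vT}.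
Proof. by rewrite limg_dim_eq // (eqP lker_linfun_inj) capv0. Qed.

Lemma inj_dimv_bij : \dim {:vT} = \dim {:wT} -> bijective f.
Proof.
move=> eq_dim; have limgT : limg (linfun f) = fullv.
  by apply/eqP; rewrite eqEdim subvf /= dim_limg_inj -eq_dim.
exists ((linfun f)^-1)%VF => x.
  by rewrite -[f x](lfunE f) (lker0_lfunK lker_linfun_inj).
by rewrite -[f _](lfunE f) limg_lfunVK // limgT memvf.
Qed.

End InjectiveLinear.

Lemma bij_dimv (K : fieldType) (vT wT : vectType K) (f : {linear vT -> wT}) :
  bijective f -> \dim {:vT} = \dim {:wT}.
Proof.
move=> [g fK gK]; rewrite -(dim_limg_inj (can_inj fK)); congr (\dim _).
apply/vspaceP => y; rewrite memvf -[y]gK -(lfunE f); exact/memv_img/memvf.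
Qed.

Lemma qpoly_valK (R : nzRingType) (h : {poly R}) : cancel val (in_qpoly h).
Proof. by move=> q; apply/val_inj/in_qpoly_small; exact: size_mk_monic. Qed.

Lemma qpoly_lrmorphE (R : comNzRingType) (h1 h2 : {poly R})
    (f : {lrmorphism {poly %/ h1} -> {poly %/ h2}}) p :
  f (in_qpoly h1 p) = in_qpoly h2 (p \Po val (f (in_qpoly h1 'X))).
Proof.
rewrite -[in LHS](coefK p) poly_def comp_polyE !linear_sum; apply: eq_bigr => i _.
by rewrite !linearZ /= !rmorphXn; congr (_ *: _ ^+ _); exact/esym/qpoly_valK.
Qed.

Section MonicQpoly.
Variables (K : fieldType) (h : {poly K}).
Hypotheses (h_monic : h \is monic) (h_gt1 : (1 < size h)%N).

Lemma mk_monic_id : mk_monic h = h.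
Proof. by rewrite /mk_monic h_gt1 h_monic. Qed.

Lemma dim_qpoly : \dim {:{poly %/ h}} = (size h).-1.
Proof. by rewrite dim_polyn mk_monic_id. Qed.

Lemma in_qpoly_eq0 p : (in_qpoly h p == 0) = (h %| p).
Proof.
rewrite -(inj_eq val_inj) /= mk_monic_id.
by rewrite -Pdiv.IdomainMonic.modpE.
Qed.

Lemma qpoly_eq0 (q : {poly %/ h}) : (q == 0) = (h %| val q).
Proof. by rewrite -in_qpoly_eq0 qpoly_valK. Qed.

End MonicQpoly.

Section CompQpoly.
Variables (K : fieldType) (h1 h2 s : {poly K}).
Hypotheses (h1_monic : h1 \is monic) (h2_monic : h2 \is monic).
Hypotheses (h1_gt1 : (1 < size h1)%N) (h2_gt1 : (1 < size h2)%N).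
Hypothesis h2_dvd_h1s : h2 %| h1 \Po s.

Definition comp_qpoly (q : {poly %/ h1}) : {poly %/ h2} :=
  in_qpoly h2 (val q \Po s).

Lemma comp_qpoly_in p : comp_qpoly (in_qpoly h1 p) = in_qpoly h2 (p \Po s).
Proof.
rewrite /comp_qpoly /= mk_monic_id // -Pdiv.IdomainMonic.modpE //.
rewrite {2}(divp_eq p h1) comp_polyD comp_polyM in_qpolyD in_qpolyM.
by move: h2_dvd_h1s; rewrite -in_qpoly_eq0 // => /eqP ->; rewrite mulr0 add0r.
Qed.

Lemma comp_qpoly_is_linear : linear comp_qpoly.
Proof. by move=> a x y; rewrite /comp_qpoly /= comp_polyD comp_polyZ linearP. Qed.

Lemma comp_qpoly_is_monoid_morphism : monoid_morphism comp_qpoly.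
Proof.
split; first by rewrite -(in_qpoly1 h1) comp_qpoly_in comp_polyC in_qpoly1.
move=> x y; rewrite -[x * y]/(in_qpoly h1 (val x * val y)) comp_qpoly_in.
by rewrite comp_polyM rmorphM.
Qed.

HB.instance Definition _ :=
  GRing.isLinear.Build K _ _ _ comp_qpoly comp_qpoly_is_linear.
HB.instance Definition _ :=
  GRing.isMonoidMorphism.Build _ _ comp_qpoly comp_qpoly_is_monoid_morphism.

Lemma comp_qpoly_kalg_iso :
    size h1 = size h2 -> (forall p, h2 %| p \Po s -> h1 %| p) ->
  kalg_iso ({poly %/ h1} : lalgType K) ({poly %/ h2} : lalgType K).
Proof.
move=> eq_size dvd_comp; exists comp_qpoly.
apply: inj_dimv_bij; last by rewrite !dim_qpoly // eq_size.
move=> x y eq_fxy; apply/eqP; rewrite -subr_eq0 qpoly_eq0 //; apply: dvd_comp.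
by rewrite -in_qpoly_eq0 // -/(comp_qpoly _) raddfB /= eq_fxy subrr.
Qed.

End CompQpoly.

Section CompDivisibility.
Variable K : fieldType.
Implicit Types (p q r s h Q : {poly K}).

Lemma irredp_dvdp_exp Q p k : irreducible_poly Q -> Q %| p ^+ k -> Q %| p.
Proof.
move=> Q_irr; elim: k => [|k IHk].
  by rewrite dvdp1 => /eqP Q_size1; have := Q_irr.1; rewrite Q_size1.
rewrite exprS => Q_dvd; have [//|Q_ndvd] := boolP (Q %| p).
move: Q_dvd; rewrite Gauss_dvdpr ?irreducible_poly_coprime // => /IHk.
by rewrite (negPf Q_ndvd).
Qed.

Lemma irredp_dvdp_comp Q h s p : irreducible_poly Q -> (1 < size h)%N ->
  h %| Q \Po s -> h %| p \Po s -> Q %| p.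
Proof.
move=> Q_irr h_gt1 hQs hps; apply: contraT => Q_ndvd.
have /coprimepP/(_ h hQs hps) : coprimep (Q \Po s) (p \Po s).
  by rewrite coprimep_comp_poly ?irreducible_poly_coprime.
by move/eqp_size; rewrite size_poly1 => h1; rewrite h1 in h_gt1.
Qed.

Lemma irredp_dvdp_exp_comp Q1 Q2 s : irreducible_poly Q1 -> irreducible_poly Q2 ->
  Q2 %| Q1 \Po s -> ~~ (Q2 ^+ 2 %| Q1 \Po s) ->
  forall j p, Q2 ^+ j %| p \Po s -> Q1 ^+ j %| p.
Proof.
move=> Q1_irr Q2_irr Q2_dvd Q2sq_ndvd; have Q2_neq0 := irredp_neq0 Q2_irr.
set u := (Q1 \Po s) %/ Q2; have Q1sE : Q1 \Po s = Q2 * u by rewrite divpKC.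
have Q2_ndvd_u : ~~ (Q2 %| u).
  by apply: contra Q2sq_ndvd; rewrite Q1sE expr2 dvdp_mul2l.
elim=> [|j IHj] p; first by move=> _; rewrite expr0 dvd1p.
move=> dvd_ps; have /IHj Q1j_dvd : Q2 ^+ j %| p \Po s.
  by apply: dvdp_trans dvd_ps; exact: dvdp_exp2l.
set w := p %/ Q1 ^+ j; have pE : p = w * Q1 ^+ j by rewrite divpK.
have Q2_dvd_ws : Q2 %| w \Po s.
  move: dvd_ps; rewrite pE comp_polyM rmorphXn /= Q1sE exprMn exprSr mulrCA.
  rewrite dvdp_mul2l ?expf_neq0 // Gauss_dvdpl // coprimep_expr //.
  by rewrite irreducible_poly_coprime.
rewrite pE exprS dvdp_mul2r ?expf_neq0 ?irredp_neq0 //.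
exact: irredp_dvdp_comp Q1_irr Q2_irr.1 Q2_dvd Q2_dvd_ws.
Qed.

Lemma comp_poly_addr_expansion p r t : exists g,
  p \Po (r + t) = p \Po r + t * (p^`() \Po r) + t ^+ 2 * g.
Proof.
elim/poly_ind: p => [|p c [g IHp]].
  by exists 0; rewrite deriv0 !comp_poly0 !mulr0 !addr0.
exists (p^`() \Po r + g * (r + t)).
rewrite derivMXaddC !comp_poly_MXaddC comp_polyD comp_polyM comp_polyX IHp.
ring.
Qed.

Lemma exists_comp_dvdp_simple Q1 Q2 r : Q2 != 0 ->
  Q2 %| Q1 \Po r -> ~~ (Q2 %| Q1^`() \Po r) ->
  exists s, Q2 %| Q1 \Po s /\ ~~ (Q2 ^+ 2 %| Q1 \Po s).
Proof.
move=> Q2_neq0 Q2_dvd Q2_ndvd'.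
have [Q2sq_dvd|] := boolP (Q2 ^+ 2 %| Q1 \Po r); last by exists r.
(* Modulo Q2^2, shifting r by Q2 adds Q2 * (Q1^`() \Po r) to Q1 \Po r. *)
have [g Q1E] := comp_poly_addr_expansion Q1 r Q2.
exists (r + Q2); rewrite Q1E; split.
  by rewrite !dvdp_add // ?dvdp_mulIl // exprS -mulrA dvdp_mulIl.
rewrite -addrA (dvdp_addr _ Q2sq_dvd) dvdp_addl ?dvdp_mulIl //.
by rewrite expr2 dvdp_mul2l.
Qed.

End CompDivisibility.

Section QpolyIsomorphism.
Variable K : fieldType.
Implicit Types (p q Q : {poly K}).

Lemma size_exp_gt1 p k : (1 < size p)%N -> (0 < k)%N -> (1 < size (p ^+ k))%N.
Proof.
move=> p_gt1 k_gt0; have p_neq0 : p != 0 by rewrite -size_poly_gt0 ltnW.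
rewrite -(prednK (_ : 0 < size (p ^+ k))%N) ?size_poly_gt0 ?expf_neq0 //.
by rewrite ltnS size_exp muln_gt0 k_gt0 andbT -ltnS prednK // ltnW.
Qed.

Lemma eqn_size_exp p q k : (0 < k)%N -> p != 0 -> q != 0 ->
  (size (p ^+ k) == size (q ^+ k)) = (size p == size q).
Proof.
move=> k_gt0 p_neq0 q_neq0.
rewrite -(prednK (_ : 0 < size (p ^+ k))%N) ?size_poly_gt0 ?expf_neq0 //.
rewrite -(prednK (_ : 0 < size (q ^+ k))%N) ?size_poly_gt0 ?expf_neq0 //.
rewrite eqSS !size_exp eqn_pmul2r // -eqSS !prednK // size_poly_gt0 //.
Qed.

Lemma kalg_iso_qpoly_size (h1 h2 : {poly K}) : h1 \is monic -> h2 \is monic ->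
    (1 < size h1)%N -> (1 < size h2)%N ->
  kalg_iso ({poly %/ h1} : lalgType K) ({poly %/ h2} : lalgType K) ->
  size h1 = size h2.
Proof.
move=> h1_monic h2_monic h1_gt1 h2_gt1 [F /bij_dimv].
by rewrite !dim_qpoly // => /(congr1 S); rewrite !prednK // ltnW.
Qed.

Lemma dvdp_comp_lrmorphX (h1 h2 : {poly K})
    (F : {lrmorphism {poly %/ h1} -> {poly %/ h2}}) :
    h1 \is monic -> h2 \is monic -> (1 < size h1)%N -> (1 < size h2)%N ->
  h2 %| h1 \Po val (F (in_qpoly h1 'X)).
Proof.
move=> h1_monic h2_monic h1_gt1 h2_gt1; rewrite -in_qpoly_eq0 // -qpoly_lrmorphE.
by move: (dvdpp h1); rewrite -in_qpoly_eq0 // => /eqP ->; rewrite raddf0.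
Qed.

Lemma kalg_iso_qpoly_of_exp Q1 Q2 k : Q1 \is monic -> Q2 \is monic ->
    irreducible_poly Q1 -> irreducible_poly Q2 -> (0 < k)%N ->
  kalg_iso ({poly %/ Q1 ^+ k} : lalgType K) ({poly %/ Q2 ^+ k} : lalgType K) ->
  kalg_iso ({poly %/ Q1} : lalgType K) ({poly %/ Q2} : lalgType K).
Proof.
move=> Q1_monic Q2_monic Q1_irr Q2_irr k_gt0 isoFk.
have [Q1_gt1 Q2_gt1] := (Q1_irr.1, Q2_irr.1).
have [Q1k_gt1 Q2k_gt1] := (size_exp_gt1 Q1_gt1 k_gt0, size_exp_gt1 Q2_gt1 k_gt0).
have [Q1k_monic Q2k_monic] := (monic_exp k Q1_monic, monic_exp k Q2_monic).
have eq_size : size Q1 = size Q2.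
  apply/eqP; rewrite -(eqn_size_exp k_gt0) ?irredp_neq0 //.
  by rewrite (kalg_iso_qpoly_size Q1k_monic Q2k_monic Q1k_gt1 Q2k_gt1 isoFk).
case: isoFk => F _; set s := val (F (in_qpoly (Q1 ^+ k) 'X)).
have Q2_dvd_Q1s : Q2 %| Q1 \Po s.
  apply: (@irredp_dvdp_exp _ _ _ k Q2_irr); rewrite -rmorphXn.
  apply: dvdp_trans (dvdp_comp_lrmorphX F _ _ _ _) => //.
  by rewrite dvdp_exp.
apply: (comp_qpoly_kalg_iso Q1_monic Q2_monic Q1_gt1 Q2_gt1 Q2_dvd_Q1s eq_size).
by move=> p; apply: irredp_dvdp_comp Q1_irr Q2_gt1 Q2_dvd_Q1s.
Qed.

Lemma kalg_iso_qpoly_exp Q1 Q2 k : Q1 \is monic -> Q2 \is monic ->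
    irreducible_poly Q1 -> irreducible_poly Q2 -> Q1^`() != 0 -> (0 < k)%N ->
  kalg_iso ({poly %/ Q1} : lalgType K) ({poly %/ Q2} : lalgType K) ->
  kalg_iso ({poly %/ Q1 ^+ k} : lalgType K) ({poly %/ Q2 ^+ k} : lalgType K).
Proof.
move=> Q1_monic Q2_monic Q1_irr Q2_irr Q1'_neq0 k_gt0 isoF.
have [Q1_gt1 Q2_gt1] := (Q1_irr.1, Q2_irr.1).
have eq_size := kalg_iso_qpoly_size Q1_monic Q2_monic Q1_gt1 Q2_gt1 isoF.
case: isoF => F /bij_inj F_inj; set r := val (F (in_qpoly Q1 'X)).
have Q2_dvd_Q1r : Q2 %| Q1 \Po r by apply: dvdp_comp_lrmorphX.
have Q2_ndvd_Q1'r : ~~ (Q2 %| Q1^`() \Po r).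
  rewrite -in_qpoly_eq0 // -qpoly_lrmorphE -(raddf0 F) (inj_eq F_inj).
  rewrite in_qpoly_eq0 //; apply: contraL (lt_size_deriv (irredp_neq0 Q1_irr)).
  by rewrite -leqNgt; apply: dvdp_leq.
have [s [Q2_dvd_Q1s Q2sq_ndvd_Q1s]] :=
  exists_comp_dvdp_simple (irredp_neq0 Q2_irr) Q2_dvd_Q1r Q2_ndvd_Q1'r.
apply: (comp_qpoly_kalg_iso (s := s)); rewrite ?monic_exp ?size_exp_gt1 //.
- by rewrite rmorphXn dvdp_exp2r.
- by apply/eqP; rewrite eqn_size_exp ?irredp_neq0 ?eq_size.
- exact: irredp_dvdp_exp_comp.
Qed.

End QpolyIsomorphism.

Lemma monic_scale_lead_coefV (K : fieldType) (P : {poly K}) :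
  P != 0 -> (lead_coef P)^-1 *: P \is monic.
Proof. by move=> P_neq0; rewrite monicE lead_coefZ mulVf ?lead_coef_eq0. Qed.

Lemma irredp_scale (K : fieldType) (c : K) (P : {poly K}) :
  c != 0 -> irreducible_poly P -> irreducible_poly (c *: P).
Proof.
move=> c_neq0 [P_gt1 P_irr]; split; first by rewrite size_scale.
move=> q q_neq1; rewrite (eqp_dvdr _ (eqp_scale P c_neq0)) => /(P_irr q q_neq1).
by move/eqp_trans; apply; rewrite eqp_sym eqp_scale.
Qed.

Lemma scale_lead_coefV_exp (K : fieldType) (P : {poly K}) k :
  (lead_coef (P ^+ k))^-1 *: P ^+ k = ((lead_coef P)^-1 *: P) ^+ k.
Proof. by rewrite exprZn lead_coef_exp exprVn. Qed.

Theorem mainTheorem7 (K : fieldType) (P1 P2 : {poly K}) (k : nat) :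
  irreducible_poly P1 -> irreducible_poly P2 ->
  P1^`() != 0 -> P2^`() != 0 -> (1 <= k)%N ->
  kalg_iso (quot_alg (P1 ^+ k) : lalgType K) (quot_alg (P2 ^+ k) : lalgType K)
  <-> kalg_iso (quot_alg P1 : lalgType K) (quot_alg P2 : lalgType K).
Proof.
move=> P1_irr P2_irr P1'_neq0 _ k_gt0; rewrite /quot_alg !scale_lead_coefV_exp.
have [P1_neq0 P2_neq0] := (irredp_neq0 P1_irr, irredp_neq0 P2_irr).
have lcV_neq0 (P : {poly K}) : P != 0 -> (lead_coef P)^-1 != 0.
  by rewrite invr_eq0 lead_coef_eq0.
have [Q1_monic Q2_monic] :=
  (monic_scale_lead_coefV P1_neq0, monic_scale_lead_coefV P2_neq0).
have Q1_irr := irredp_scale (lcV_neq0 _ P1_neq0) P1_irr.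
have Q2_irr := irredp_scale (lcV_neq0 _ P2_neq0) P2_irr.
split; first exact: kalg_iso_qpoly_of_exp.
by apply: kalg_iso_qpoly_exp; rewrite // derivZ scaler_eq0 negb_or lcV_neq0.
Qed.
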